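(* Let $k \ge 2$ and $v$ be integers with $v \equiv 2 \pmod{k-1}$ and $v \ge k(k-1)^2 + 2k$. Then \[ \frac{2v-4}{k-1} \le \beta(2,v,k) \le \frac{2v-4}{k-1} + k^2 - 2. \]
   Context: For integers $v \ge k \ge 2$, a $(v,k)$-packing is a pair $(X,\mathcal{B})$ where $X$ is a set of $v$ points and $\mathcal{B}$ is a set of $k$-subsets of $X$ (blocks) such that every pair of distinct points lies in at most one block. A partial parallel class (PPC) is a set of pairwise disjoint blocks; its size is the number of blocks. A PPC of size $\rho$ is maximum if the packing has no PPC of size $\rho+1$. $\beta(\rho,v,k)$ denotes the maximum number of blocks in a $(v,k)$-packing in which the maximum PPC has size $\rho$. *)

From mathcomp Require Import all_boot.
Set Implicit Arguments. Unset Strict Implicit. Unset Printing Implicit Defensive.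

Definition is_packing (v k : nat) (B : {set {set 'I_v}}) : bool :=
  [forall b in B, #|b| == k] &&
  [forall x : 'I_v, forall y : 'I_v,
     (x != y) ==> (#|[set b in B | (x \in b) && (y \in b)]| <= 1)].

Definition is_ppc (v : nat) (B P : {set {set 'I_v}}) : bool :=
  (P \subset B) &&
  [forall b1 in P, forall b2 in P, (b1 != b2) ==> [disjoint b1 & b2]].

Definition max_ppc_size (v : nat) (B : {set {set 'I_v}}) (rho : nat) : bool :=
  [exists P : {set {set 'I_v}}, is_ppc B P && (#|P| == rho)] &&
  ~~ [exists P : {set {set 'I_v}}, is_ppc B P && (#|P| == rho.+1)].

(* beta(rho, v, k): maximum number of blocks of a (v,k)-packing whose maximum
   PPC has size rho (0 if no such packing exists). *)
Definition beta (rho v k : nat) : nat :=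
  \max_(B : {set {set 'I_v}} | is_packing k B && max_ppc_size B rho) #|B|.

From mathcomp Require Import all_boot zify.
Set Implicit Arguments. Unset Strict Implicit. Unset Printing Implicit Defensive.

(* Write v = 2 + r(k-1).
   Lower bound: on two points a, b and an r x (k-1) grid, take the r rows extended
   by a and the r cyclically wrapped diagonals extended by b.  Every block contains
   a or b, so no three blocks are pairwise disjoint, yet row 0 and diagonal 1 are.
   Upper bound: let no three blocks be pairwise disjoint.  The blocks through p
   avoiding a set Y are disjoint outside p, so there are at most (v-|Y|-1)/(k-1) of
   them; an intersecting family of blocks not contained in a star has at most
   1 + k(k-1) members.  If more than 2k blocks pass through x, the blocks missing x
   pairwise meet, so |B| <= (r + 1) + max(r, 1 + k(k-1)).  Otherwise, for a fixed
   block C, at most 1 + k(2k-1) blocks meet C, and those disjoint from C pairwise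
   meet and avoid C, so |B| <= 1 + k(2k-1) + max(r - 1, 1 + k(k-1)). *)

Lemma leq_card_bigcup (T I : finType) (P : pred I) (A : I -> {set T}) :
  #|\bigcup_(i | P i) A i| <= \sum_(i | P i) #|A i|.
Proof.
elim/big_rec2: _ => [|i n X _ leXn]; first by rewrite cards0.
by apply: leq_trans (leq_card_setU _ _).1 _; rewrite leq_add2l.
Qed.

Lemma disjointPn (T : finType) (A C : {set T}) :
  reflect (exists2 x, x \in A & x \in C) (~~ [disjoint A & C]).
Proof.
rewrite -setI_eq0; apply: (iffP (set0Pn _)) => [[x]|[x xA xC]].
  by rewrite inE => /andP[]; exists x.
by exists x; rewrite inE xA xC.
Qed.

Section Packing.
Variables (v k : nat) (B : {set {set 'I_v}}).
Hypothesis packB : is_packing k B.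

Definition star (x : 'I_v) := [set b in B | x \in b].

Lemma card_block b : b \in B -> #|b| = k.
Proof. by case/andP: packB => /forall_inP cardB _ /cardB/eqP. Qed.

Lemma block_eq b1 b2 x y : b1 \in B -> b2 \in B -> x != y ->
  x \in b1 -> y \in b1 -> x \in b2 -> y \in b2 -> b1 = b2.
Proof.
move=> b1B b2B xy xb1 yb1 xb2 yb2.
case/andP: packB => _ /forallP/(_ x)/forallP/(_ y)/implyP/(_ xy)/card_le1_eqP.
by apply; rewrite inE ?b1B ?b2B ?xb1 ?yb1 ?xb2 ?yb2.
Qed.

Lemma card_star_meeting z (Y : {set 'I_v}) (G : {set {set 'I_v}}) :
  z \notin Y -> G \subset star z -> (forall b, b \in G -> ~~ [disjoint b & Y]) ->
  #|G| <= #|Y|.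
Proof.
move=> zY /subsetP Gz GY.
pose f b := odflt z [pick y in b :&: Y].
have fP b : b \in G -> f b \in b :&: Y.
  move/GY/disjointPn=> [y yb yY]; rewrite /f; case: pickP => [//|/(_ y)].
  by rewrite inE yb yY.
have f_inj : {in G &, injective f}.
  move=> b1 b2 b1G b2G eq_f.
  have := fP _ b1G; have := fP _ b2G; rewrite !inE eq_f => /andP[fb2 fY] /andP[fb1 _].
  have := Gz _ b1G; have := Gz _ b2G; rewrite !inE => /andP[b2B zb2] /andP[b1B zb1].
  by apply: (block_eq b1B b2B _ zb1 fb1 zb2 fb2); apply: contraNneq zY => ->.
rewrite -(card_in_imset f_inj); apply/subset_leq_card/subsetP => _ /imsetP[b bG ->].
by have /setIP[] := fP _ bG.
Qed.

Lemma card_star_avoiding p (Y : {set 'I_v}) (G : {set {set 'I_v}}) :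
  G \subset star p -> (forall b, b \in G -> [disjoint b & Y]) ->
  #|G| * k.-1 <= v - #|Y| - 1.
Proof.
move=> /subsetP Gp GY.
have [->|[b0 b0G]] := set_0Vmem G; first by rewrite cards0.
have pY : p \notin Y.
  by have := Gp _ b0G; rewrite inE => /andP[_ /(disjointFr (GY _ b0G))] ->.
have GB b : b \in G -> (b \in B) && (p \in b) by move/Gp; rewrite inE.
pose P := [set b :\ p | b in G].
have card_P : #|P| = #|G|.
  apply: card_in_imset => b1 b2 /GB/andP[_ pb1] /GB/andP[_ pb2] eq_b.
  by rewrite -(setD1K pb1) -(setD1K pb2) eq_b.
have sum_P : \sum_(A in P) #|A| = #|P| * k.-1.
  rewrite -sum_nat_const; apply: eq_bigr => _ /imsetP[b /GB/andP[bB pb] ->].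
  by have := cardsD1 p b; rewrite pb card_block // => ->.
have trivP : trivIset P.
  apply/trivIsetP => _ _ /imsetP[b1 b1G ->] /imsetP[b2 b2G ->] neq_b.
  have /andP[b1B pb1] := GB _ b1G; have /andP[b2B pb2] := GB _ b2G.
  apply/negPn/negP=> /disjointPn[y /setD1P[yp yb1] /setD1P[_ yb2]].
  by move: neq_b; rewrite (block_eq b1B b2B yp yb1 pb1 yb2 pb2) eqxx.
have cover_P : cover P \subset ~: (p |: Y).
  apply/bigcupsP => _ /imsetP[b bG ->]; apply/subsetP => y /setD1P[yp yb].
  by rewrite !inE negb_or yp (disjointFr (GY _ bG) yb).
rewrite -card_P -sum_P (eqP trivP).
apply: leq_trans (subset_leq_card cover_P) _.
have := cardsC (p |: Y); rewrite cardsU1 pY card_ord add1n.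
(* Naming the cardinals merges occurrences that differ only in hidden coercions. *)
by set c := #|~: _|; set y := #|Y|; lia.
Qed.

Lemma card_meeting_block (F : {set {set 'I_v}}) C m :
  F \subset B -> C \in F -> (forall p, p \in C -> #|F :&: star p| <= m.+1) ->
  #|[set b in F | ~~ [disjoint b & C]]| <= 1 + k * m.
Proof.
move=> /subsetP FB CF starC.
have cover : [set b in F | ~~ [disjoint b & C]] \subset
             C |: \bigcup_(p in C) (F :&: star p :\ C).
  apply/subsetP => b; rewrite !inE => /andP[bF /disjointPn[p pb pC]].
  case: eqP => //= /eqP bC; apply/bigcupP; exists p => //.
  by rewrite !inE bC bF FB.
apply: leq_trans (subset_leq_card cover) _; rewrite cardsU1.
apply: leq_add; first by case: (_ \notin _).
apply: leq_trans (leq_card_bigcup _ _) _.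
rewrite -(card_block (FB _ CF)) -sum_nat_const; apply: leq_sum => p pC.
have CFp : C \in F :&: star p by rewrite !inE CF FB.
by have := starC p pC; rewrite (cardsD1 C) CFp.
Qed.

Lemma intersecting_star_or_small (F : {set {set 'I_v}}) :
  F \subset B -> (forall b1 b2, b1 \in F -> b2 \in F -> ~~ [disjoint b1 & b2]) ->
  (exists p, F \subset star p) \/ #|F| <= 1 + k * k.-1.
Proof.
move=> FB meetF.
have [/existsP[p Fp]|no_star] := boolP [exists p, F \subset star p].
  by left; exists p.
right; have [->|[C CF]] := set_0Vmem F; first by rewrite cards0.
have -> : F = [set b in F | ~~ [disjoint b & C]].
  by apply/setP => b; rewrite inE andb_idr // => bF; apply: meetF.
apply: card_meeting_block => // p pC.
have [D DF pD] : exists2 D, D \in F & p \notin D.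
  move/existsPn: no_star => /(_ p)/subsetPn[D DF]; rewrite inE (subsetP FB _ DF).
  by exists D.
have k_gt0 : 0 < k by rewrite -(card_block (subsetP FB _ CF)); apply/card_gt0P; exists p.
rewrite prednK // -(card_block (subsetP FB _ DF)).
apply: card_star_meeting pD _ _; first exact: subsetIr.
by move=> b /setIP[bF _]; apply: meetF.
Qed.

Lemma card_intersecting_avoiding (F : {set {set 'I_v}}) (Y : {set 'I_v}) :
  F \subset B -> (forall b1 b2, b1 \in F -> b2 \in F -> ~~ [disjoint b1 & b2]) ->
  (forall b, b \in F -> [disjoint b & Y]) ->
  #|F| * k.-1 <= v - #|Y| - 1 \/ #|F| <= 1 + k * k.-1.
Proof.
move=> FB meetF FY; case: (intersecting_star_or_small FB meetF) => [[p Fp]|]; last by right.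
by left; apply: card_star_avoiding Fp FY.
Qed.

Section NoThreeDisjoint.
Hypothesis no_disjoint_triple : forall b1 b2 b3, b1 \in B -> b2 \in B -> b3 \in B ->
  [disjoint b1 & b2] -> [disjoint b1 & b3] -> [disjoint b2 & b3] -> False.

(* Otherwise every block through x meets C or D, so star x injects into C :|: D. *)
Lemma big_star_avoiders_meet x C D : 2 * k < #|star x| -> C \in B -> D \in B ->
  x \notin C -> x \notin D -> ~~ [disjoint C & D].
Proof.
move=> big CB DB xC xD; apply/negP => dCD.
suff /leq_trans/(_ (leq_card_setU C D).1) : #|star x| <= #|C :|: D|.
  by rewrite !card_block // addnn -mul2n leqNgt big.
apply: card_star_meeting (subxx _) _; first by rewrite in_setU negb_or xC xD.
move=> b; rewrite inE => /andP[bB _]; apply/negP => dbCD.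
exact: no_disjoint_triple bB CB DB
  (disjointWr (subsetUl C D) dbCD) (disjointWr (subsetUr C D) dbCD) dCD.
Qed.

Variable r : nat.
Hypotheses (k_ge2 : 2 <= k) (v_r : v - 2 = r * k.-1) (r_ge : k * k.-1 + 2 <= r).

Lemma card_star_le x : #|star x| <= r.+1.
Proof.
have h : #|star x| * k.-1 <= v - #|@set0 'I_v| - 1.
  by apply: card_star_avoiding (subxx _) _ => b _; rewrite -setI_eq0 setI0.
rewrite cards0 subn0 in h.
rewrite -ltnS -(@ltn_pmul2r k.-1); last by lia.
by rewrite !mulSn; lia.
Qed.

Lemma card_le_of_big_star x : 2 * k < #|star x| -> #|B| <= 2 * r + (k ^ 2 - 2).
Proof.
move=> big; set F := [set b in B | x \notin b].
have FB : F \subset B by apply/subsetP => b; rewrite inE => /andP[].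
have meetF b1 b2 : b1 \in F -> b2 \in F -> ~~ [disjoint b1 & b2].
  rewrite !inE => /andP[b1B xb1] /andP[b2B xb2].
  exact: big_star_avoiders_meet big b1B b2B xb1 xb2.
have F_x b : b \in F -> [disjoint b & [set x]].
  by rewrite inE disjoint_sym disjoints1 => /andP[].
have B_cover : B \subset star x :|: F.
  by apply/subsetP => b bB; rewrite !inE bB /=; case: (x \in b).
apply: leq_trans (subset_leq_card B_cover) _.
apply: leq_trans (leq_card_setU _ _).1 _.
have := card_star_le x.
case: (card_intersecting_avoiding FB meetF F_x) => [|F_le]; last by nia.
rewrite cards1 -subnDA v_r leq_pmul2r; last by lia.
by nia.
Qed.

Lemma card_le_of_small_stars :
  (forall x, #|star x| <= 2 * k) -> #|B| <= 2 * r + (k ^ 2 - 2).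
Proof.
move=> small; have [->|[C CB]] := set_0Vmem B; first by rewrite cards0.
set M := [set b in B | ~~ [disjoint b & C]]; set F := [set b in B | [disjoint b & C]].
have M_le : #|M| <= 1 + k * (2 * k).-1.
  apply: card_meeting_block (subxx _) CB _ => p _; rewrite prednK; last by lia.
  exact/(leq_trans _ (small p))/subset_leq_card/subsetIr.
have FB : F \subset B by apply/subsetP => b; rewrite inE => /andP[].
have meetF b1 b2 : b1 \in F -> b2 \in F -> ~~ [disjoint b1 & b2].
  rewrite !inE => /andP[b1B d1] /andP[b2B d2]; apply/negP => d12.
  exact: no_disjoint_triple b1B b2B CB d12 d1 d2.
have F_C b : b \in F -> [disjoint b & C] by rewrite inE => /andP[].
have B_cover : B \subset M :|: F.
  by apply/subsetP => b bB; rewrite !inE bB /=; case: [disjoint b & C].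
apply: leq_trans (subset_leq_card B_cover) _.
apply: leq_trans (leq_card_setU _ _).1 _.
case: (card_intersecting_avoiding FB meetF F_C) => [|F_le]; last by nia.
rewrite (card_block CB).
have -> : v - k - 1 = r.-1 * k.-1 by rewrite -subn1 mulnBl mul1n -v_r; lia.
rewrite leq_pmul2r; last by lia.
(* Tight exactly when r = k(k-1) + 2, i.e. at the threshold v = k(k-1)^2 + 2k. *)
by nia.
Qed.

Lemma card_le_of_no_three_disjoint : #|B| <= 2 * r + (k ^ 2 - 2).
Proof.
have [/existsP[x big]|] := boolP [exists x, 2 * k < #|star x|].
  exact: card_le_of_big_star big.
by move/existsPn => small; apply: card_le_of_small_stars => x; rewrite leqNgt small.
Qed.

End NoThreeDisjoint.

End Packing.

Lemma disjoint_block_neq v k (B : {set {set 'I_v}}) (b1 b2 : {set 'I_v}) :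
  0 < k -> is_packing k B -> b1 \in B -> [disjoint b1 & b2] -> b1 != b2.
Proof.
move=> k_gt0 packB b1B; apply: contraTneq => <-.
have /card_gt0P[x xb1] : 0 < #|b1| by rewrite (card_block packB b1B).
by apply/negP => /disjointFr/(_ xb1); rewrite xb1.
Qed.

Lemma max_ppc2_no_three_disjoint v k (B : {set {set 'I_v}}) :
  0 < k -> is_packing k B -> max_ppc_size B 2 ->
  forall b1 b2 b3, b1 \in B -> b2 \in B -> b3 \in B ->
  [disjoint b1 & b2] -> [disjoint b1 & b3] -> [disjoint b2 & b3] -> False.
Proof.
move=> k_gt0 packB /andP[_ /existsPn no_ppc3] b1 b2 b3 b1B b2B b3B d12 d13 d23.
have neq (c1 c2 : {set 'I_v}) : c1 \in B -> [disjoint c1 & c2] -> c1 != c2.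
  exact: disjoint_block_neq k_gt0 packB.
have d31 : [disjoint b3 & b1] by rewrite disjoint_sym.
have d32 : [disjoint b3 & b2] by rewrite disjoint_sym.
apply: (negP (no_ppc3 [set b1; b2; b3])); apply/andP; split; last first.
  rewrite setUC cardsU1 !inE cards2 negb_or.
  by rewrite (neq _ _ b1B d12) (neq _ _ b3B d31) (neq _ _ b3B d32).
apply/andP; split; first by apply/subsetP => c; rewrite !inE => /orP[/orP[]|] /eqP->.
apply/forall_inP => c1; rewrite !inE => c1P; apply/forall_inP => c2; rewrite !inE => c2P.
apply/implyP; case/orP: c1P => [/orP[]|] /eqP->; case/orP: c2P => [/orP[]|] /eqP->;
  by rewrite ?eqxx // disjoint_sym ?d12 ?d13 ?d23.
Qed.

Lemma beta2_le v k r : 2 <= k -> v - 2 = r * k.-1 -> k * k.-1 + 2 <= r ->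
  beta 2 v k <= 2 * r + (k ^ 2 - 2).
Proof.
move=> k_ge2 v_r r_ge; apply/bigmax_leqP => B /andP[packB maxB].
have no_disjoint_triple := max_ppc2_no_three_disjoint (ltnW k_ge2) packB maxB.
by have := card_le_of_no_three_disjoint packB no_disjoint_triple k_ge2 v_r r_ge.
Qed.

Lemma ppc_le2_of_cover2 v (B P : {set {set 'I_v}}) x y :
  (forall b, b \in B -> (x \in b) || (y \in b)) -> is_ppc B P -> #|P| <= 2.
Proof.
move=> cover /andP[/subsetP PB /forall_inP disjP].
have through_le1 z : #|[set b in P | z \in b]| <= 1.
  apply/card_le1_eqP => b1 b2; rewrite !inE => /andP[b1P zb1] /andP[b2P zb2].
  apply/eqP/negP => /negP neq_b.
  have := implyP (forall_inP (disjP _ b2P) _ b1P) neq_b.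
  by move=> /disjointFr/(_ zb2); rewrite zb1.
have P_cover : P \subset [set b in P | x \in b] :|: [set b in P | y \in b].
  by apply/subsetP => b bP; rewrite !inE bP /= cover ?PB.
apply: leq_trans (subset_leq_card P_cover) _.
exact: leq_trans (leq_card_setU _ _).1 (leq_add (through_le1 x) (through_le1 y)).
Qed.

Lemma addn_modr_inj r l j1 j2 :
  j1 < r -> j2 < r -> (l + j1) %% r = (l + j2) %% r -> j1 = j2.
Proof. by move=> j1_lt j2_lt /eqP; rewrite eqn_modDl !modn_small // => /eqP. Qed.

Section Construction.
Variables n r : nat.
Hypotheses (n_gt0 : 0 < n) (n_lt_r : n < r).
Local Notation v := (r * n).+2.
Let r_gt0 : 0 < r := leq_ltn_trans (leq0n n) n_lt_r.

Definition grid_pt (q j : nat) : 'I_v := inord (2 + q * n + j).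

Let a : 'I_v := ord0.
Let b : 'I_v := inord 1.

Lemma grid_ptK q j : q < r -> j < n -> grid_pt q j = 2 + q * n + j :> nat.
Proof.
move=> q_lt j_lt; rewrite inordK //.
suff : q * n + j < r * n by lia.
by apply: leq_trans (_ : q.+1 * n <= r * n); rewrite ?leq_mul2r ?q_lt ?orbT // mulSn; lia.
Qed.

Lemma grid_pt_inj q j q' j' : q < r -> j < n -> q' < r -> j' < n ->
  grid_pt q j = grid_pt q' j' -> q = q' /\ j = j'.
Proof.
move=> q_lt j_lt q'_lt j'_lt /(congr1 (@nat_of_ord _)); rewrite !grid_ptK // => /eqP.
rewrite -!addnA eqn_add2l => /eqP eq_qj; split.
  by have := congr1 (divn^~ n) eq_qj; rewrite /= !divnMDl // !divn_small // !addn0.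
by have := congr1 (modn^~ n) eq_qj; rewrite /= !modnMDl !modn_small.
Qed.

Lemma grid_pt_neq q j : q < r -> j < n -> (grid_pt q j != a) && (grid_pt q j != b).
Proof.
move=> q_lt j_lt; apply/andP; split; apply/eqP => /(congr1 (@nat_of_ord _));
  by rewrite grid_ptK //= ?inordK //; lia.
Qed.

(* The r * n remaining points form an r x n grid; row_block q is row q plus a, and
   diag_block l is the cyclically wrapped diagonal of slope 1 from (l, 0) plus b. *)
Definition row_block q : {set 'I_v} := a |: [set grid_pt q j | j : 'I_n].
Definition diag_block l : {set 'I_v} := b |: [set grid_pt ((l + j) %% r) j | j : 'I_n].
Definition grid_blocks : {set {set 'I_v}} :=
  [set row_block q | q : 'I_r] :|: [set diag_block l | l : 'I_r].

Lemma row_blockP q x : x \in row_block q -> x != a -> exists2 j, j < n & x = grid_pt q j.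
Proof. by case/setU1P => [->|/imsetP[j _ ->]]; [rewrite eqxx | exists j]. Qed.

Lemma diag_blockP l x : x \in diag_block l -> x != b ->
  exists2 j, j < n & x = grid_pt ((l + j) %% r) j.
Proof. by case/setU1P => [->|/imsetP[j _ ->]]; [rewrite eqxx | exists j]. Qed.

Lemma grid_pt_in_row q q' j : q < r -> q' < r -> j < n ->
  (grid_pt q' j \in row_block q) = (q' == q).
Proof.
move=> q_lt q'_lt j_lt; apply/idP/eqP => [|->]; last first.
  by apply/setU1r/imsetP; exists (Ordinal j_lt).
have /andP[q'ja _] := grid_pt_neq q'_lt j_lt.
by case/row_blockP => // j' j'_lt /grid_pt_inj[].
Qed.

Lemma grid_pt_in_diag q l j : q < r -> j < n ->
  (grid_pt q j \in diag_block l) = (q == (l + j) %% r).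
Proof.
move=> q_lt j_lt; apply/idP/eqP => [|->]; last first.
  by apply/setU1r/imsetP; exists (Ordinal j_lt).
have /andP[_ qjb] := grid_pt_neq q_lt j_lt.
case/diag_blockP => // j' j'_lt eq_pt.
by have [-> ->] := grid_pt_inj q_lt j_lt (ltn_pmod _ r_gt0) j'_lt eq_pt.
Qed.

Lemma a_notin_diag l : a \notin diag_block l.
Proof.
apply/negP => /diag_blockP[].
  by apply/eqP => /(congr1 (@nat_of_ord _)); rewrite inordK.
move=> j j_lt eq_a.
by have := grid_pt_neq (ltn_pmod (l + j) r_gt0) j_lt; rewrite -eq_a eqxx.
Qed.

Lemma card_row_block q : q < r -> #|row_block q| = n.+1.
Proof.
move=> q_lt; rewrite cardsU1 card_imset ?card_ord; last first.
  by move=> j1 j2 /grid_pt_inj[] // _ /val_inj.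
suff -> : a \in [set grid_pt q j | j : 'I_n] = false by [].
apply/imsetP => -[j _ /esym/eqP].
by rewrite (negPf (andP (grid_pt_neq q_lt (ltn_ord j))).1).
Qed.

Lemma card_diag_block l : #|diag_block l| = n.+1.
Proof.
rewrite cardsU1 card_imset ?card_ord; last first.
  by move=> j1 j2 /grid_pt_inj[] //; rewrite ?ltn_pmod // => _ /val_inj.
suff -> : b \in [set grid_pt ((l + j) %% r) j | j : 'I_n] = false by [].
apply/imsetP => -[j _ /esym/eqP].
by rewrite (negPf (andP (grid_pt_neq (ltn_pmod _ r_gt0) (ltn_ord j))).2).
Qed.

Lemma row_blocks_eq q1 q2 x y : q1 < r -> q2 < r -> x != y ->
  x \in row_block q1 -> y \in row_block q1 -> x \in row_block q2 -> y \in row_block q2 ->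
  q1 = q2.
Proof.
move=> q1_lt q2_lt; wlog xa : x y / x != a => [wl|xy x1 _ x2 _].
  have [->|] := eqVneq x a; last exact: wl.
  by move=> ay *; apply: (wl y a); rewrite // eq_sym.
have [j j_lt eq_x] := row_blockP x1 xa.
by move: x2; rewrite eq_x grid_pt_in_row // => /eqP.
Qed.

Lemma diag_blocks_eq l1 l2 x y : l1 < r -> l2 < r -> x != y ->
  x \in diag_block l1 -> y \in diag_block l1 ->
  x \in diag_block l2 -> y \in diag_block l2 -> l1 = l2.
Proof.
move=> l1_lt l2_lt; wlog xb : x y / x != b => [wl|xy x1 _ x2 _].
  have [->|] := eqVneq x b; last exact: wl.
  by move=> bx *; apply: (wl y b); rewrite // eq_sym.
have [j j_lt eq_x] := diag_blockP x1 xb.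
move: x2; rewrite eq_x grid_pt_in_diag ?ltn_pmod // => /eqP.
by rewrite ![_ + j]addnC => /addn_modr_inj; apply.
Qed.

Lemma row_diag_common q l z : q < r -> z \in row_block q -> z \in diag_block l ->
  exists2 j, j < n & z = grid_pt q j /\ q = (l + j) %% r.
Proof.
move=> q_lt z1 z2; have za : z != a by apply: contraNneq (a_notin_diag l) => <-.
have [j j_lt eq_z] := row_blockP z1 za.
by exists j => //; move: z2; rewrite eq_z grid_pt_in_diag // => /eqP.
Qed.

Lemma row_diag_meet_le1 q l x y : q < r -> x \in row_block q -> y \in row_block q ->
  x \in diag_block l -> y \in diag_block l -> x = y.
Proof.
move=> q_lt x1 y1 x2 y2.
have [jx jx_lt [-> qx]] := row_diag_common q_lt x1 x2.
have [jy jy_lt [-> qy]] := row_diag_common q_lt y1 y2.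
by rewrite (@addn_modr_inj r l jx jy) -?qx //; lia.
Qed.

Lemma grid_blocksP c : c \in grid_blocks ->
  (exists2 q, q < r & c = row_block q) \/ (exists2 l, l < r & c = diag_block l).
Proof.
by case/setUP => /imsetP[i _ ->]; [left | right]; exists i.
Qed.

Lemma row_block_in q : q < r -> row_block q \in grid_blocks.
Proof. by move=> q_lt; apply/setUP; left; apply/imsetP; exists (Ordinal q_lt). Qed.

Lemma diag_block_in l : l < r -> diag_block l \in grid_blocks.
Proof. by move=> l_lt; apply/setUP; right; apply/imsetP; exists (Ordinal l_lt). Qed.

Lemma a_in_row q : a \in row_block q.
Proof. exact: setU11. Qed.

Lemma row_neq_diag q l : row_block q != diag_block l.
Proof. by apply: contraNneq (a_notin_diag l) => <-; apply: a_in_row. Qed.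

Lemma grid_blocks_packing : is_packing n.+1 grid_blocks.
Proof.
apply/andP; split.
  apply/forall_inP => c /grid_blocksP[] [i i_lt ->];
    by rewrite ?card_row_block ?card_diag_block.
apply/forallP => x; apply/forallP => y; apply/implyP => xy; apply/card_le1_eqP => c1 c2.
move=> /setIdP[/grid_blocksP c1B /andP[x1 y1]] /setIdP[/grid_blocksP c2B /andP[x2 y2]].
case: c1B c2B => -[i1 i1_lt eq1] [] [i2 i2_lt eq2]; subst c1 c2.
- by rewrite (row_blocks_eq i1_lt i2_lt xy x1 y1 x2 y2).
- by move: xy; rewrite (row_diag_meet_le1 i1_lt x1 y1 x2 y2) eqxx.
- by move: xy; rewrite (row_diag_meet_le1 i2_lt x2 y2 x1 y1) eqxx.
- by rewrite (diag_blocks_eq i1_lt i2_lt xy x1 y1 x2 y2).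
Qed.

Lemma grid_blocks_max_ppc2 : max_ppc_size grid_blocks 2.
Proof.
have disj : [disjoint row_block 0 & diag_block 1].
  apply/negPn/negP => /disjointPn[z z1 z2].
  by have [j j_lt [_]] := row_diag_common r_gt0 z1 z2; rewrite modn_small //; lia.
apply/andP; split; last first.
  apply/existsPn => P; apply/negP => /andP[/ppc_le2_of_cover2 P_le /eqP card_P].
  suff : #|P| <= 2 by rewrite card_P.
  apply: (P_le a b) => c /grid_blocksP[] [i _ ->]; first by rewrite a_in_row.
  by rewrite setU11 orbT.
apply/existsP; exists [set row_block 0; diag_block 1].
rewrite cards2 row_neq_diag andbT; apply/andP; split.
  apply/subsetP => c /set2P[] ->; first exact: row_block_in.
  by apply: diag_block_in; apply: leq_ltn_trans n_lt_r.
apply/forall_inP => c1 /set2P c1P; apply/forall_inP => c2 /set2P c2P; apply/implyP.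
by case: c1P c2P => -> [] ->; rewrite ?eqxx // disjoint_sym.
Qed.

Lemma card_grid_blocks : #|grid_blocks| = 2 * r.
Proof.
rewrite cardsU (_ : _ :&: _ = set0); last first.
  apply/setP => c; rewrite !inE; apply/negP => /andP[/imsetP[q _ ->] /imsetP[l _ /eqP]].
  by rewrite (negPf (row_neq_diag q l)).
rewrite cards0 subn0 !card_imset ?card_ord; first by lia.
  move=> l1 l2 eq_l; apply/val_inj.
  have := grid_pt_in_diag l1 (ltn_pmod l1 r_gt0) n_gt0.
  rewrite addn0 eqxx eq_l grid_pt_in_diag ?ltn_pmod // addn0 !modn_small //.
  by move/eqP.
move=> q1 q2 eq_q; apply/val_inj.
have := grid_pt_in_row (ltn_ord q1) (ltn_ord q1) n_gt0.
by rewrite eqxx eq_q grid_pt_in_row // => /eqP.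
Qed.

Lemma beta2_ge : 2 * r <= beta 2 (r * n).+2 n.+1.
Proof.
rewrite -card_grid_blocks.
apply: (leq_bigmax_cond (P := fun B => is_packing n.+1 B && max_ppc_size B 2)
                        (F := fun B => #|B|)).
by rewrite grid_blocks_packing grid_blocks_max_ppc2.
Qed.

End Construction.

Theorem theorem5p6 (k v : nat) :
  2 <= k ->
  v = 2 %[mod k.-1] ->
  k * (k.-1)^2 + 2 * k <= v ->
  (2 * v - 4) %/ k.-1 <= beta 2 v k <= (2 * v - 4) %/ k.-1 + (k ^ 2 - 2).
Proof.
move=> k_ge2 v_mod v_ge.
have n_gt0 : 0 < k.-1 by lia.
have v_ge2 : 2 <= v by apply: leq_trans v_ge; lia.
set r := (v - 2) %/ k.-1.
have v_r : v - 2 = r * k.-1 by rewrite divnK // -(eqn_mod_dvd _ v_ge2); apply/eqP.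
have -> : (2 * v - 4) %/ k.-1 = 2 * r.
  by rewrite (_ : 2 * v - 4 = 2 * r * k.-1) ?mulnK // -mulnA -v_r; lia.
have r_ge : k * k.-1 + 2 <= r by rewrite -(leq_pmul2r n_gt0) -v_r; nia.
apply/andP; split; last exact: beta2_le.
rewrite (_ : v = (r * k.-1).+2); last by lia.
by rewrite -[k in beta _ _ k](prednK (ltnW k_ge2)); apply: beta2_ge; lia.
Qed.
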